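(* Let $\mathcal{G}=(V,L)$ be a finite connected undirected graph with monitor set $M$ and non-monitor set $N=V\setminus M$, with measurement paths given by Controllable Simple-path Probing (CSP). Let $S\subseteq N$ and $k\ge1$. (a) If for every node set $V'\subseteq V$ with $|V'|\le k+1$ containing at most one monitor, each connected component of $\mathcal{G}-V'$ that contains a node of $S$ also contains a monitor, then $S$ is $k$-identifiable. (b) If $S$ is $k$-identifiable, then for every node set $V'\subseteq V$ with $|V'|\le k$ containing at most one monitor, each connected component of $\mathcal{G}-V'$ that contains a node of $S$ also contains a monitor.
   Context: $\mathcal{G}-V'$ denotes deletion of the nodes of $V'$ and incident links. Under CSP, the measurement paths $P$ are all simple paths (no repeated nodes) in $\mathcal{G}$ between two distinct monitors. A failure set is any $F\subseteq N$; a path fails iff it traverses a node of $F$. $P_F$ is the set of paths in $P$ traversing a node of $F$; $F_1,F_2$ distinguishable iff $P_{F_1}\ne P_{F_2}$. $S\subseteq N$ is $k$-identifiable if any two failure sets $F_1,F_2$ with $|F_1|,|F_2|\le k$ and $F_1\cap S\ne F_2\cap S$ are distinguishable. *)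

From mathcomp Require Import all_boot.
Set Implicit Arguments. Unset Strict Implicit. Unset Printing Implicit Defensive.

Definition simple_graph (V : finType) (e : rel V) : Prop :=
  symmetric e /\ irreflexive e.

Definition connected_graph (V : finType) (e : rel V) : Prop :=
  forall x y : V, connect e x y.

(* CSP measurement path: a simple path (no repeated nodes), given by its
   node sequence, between two distinct monitors. *)
Definition csp_path (V : finType) (e : rel V) (M : {set V}) (p : seq V) : Prop :=
  exists (x : V) (q : seq V),
    [/\ p = x :: q, path e x q & uniq p] /\
    [/\ x \in M, last x q \in M & x != last x q].

Definition fails (V : finType) (F : {set V}) (p : seq V) : bool :=
  has (fun v => v \in F) p.

(* F1, F2 distinguishable iff P_F1 <> P_F2, where P_F = set of CSP paths
   traversing a node of F. *)
Definition distinguishable (V : finType) (e : rel V) (M F1 F2 : {set V}) : Prop :=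
  exists p : seq V, csp_path e M p /\ fails F1 p != fails F2 p.

Definition k_identifiable (V : finType) (e : rel V) (M S : {set V}) (k : nat) : Prop :=
  forall F1 F2 : {set V},
    F1 \subset ~: M -> F2 \subset ~: M ->
    #|F1| <= k -> #|F2| <= k ->
    F1 :&: S != F2 :&: S ->
    distinguishable e M F1 F2.

Definition del_rel (V : finType) (e : rel V) (V' : {set V}) : rel V :=
  fun x y => [&& e x y, x \notin V' & y \notin V'].

Definition comps_reach_monitor (V : finType) (e : rel V) (M S V' : {set V}) : Prop :=
  forall s, s \in S -> s \notin V' ->
    exists2 m, m \in M :\: V' & connect (del_rel e V') s m.

Definition cond (V : finType) (e : rel V) (M S : {set V}) (j : nat) : Prop :=
  forall V' : {set V}, #|V'| <= j -> #|V' :&: M| <= 1 ->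
    comps_reach_monitor e M S V'.

From mathcomp Require Import all_boot.

(** (a) If s in S is failed by F1 but not by F2, apply the hypothesis to the
node sets F2 + v: in G - F2 no single vertex v <> s separates s from the
monitors.  A fan argument then yields a simple monitor-to-monitor path
through s avoiding F2: take any such path R and a shortest path from s to R,
ending at y; since y is not a cut vertex, s escapes around y, and the escape
grafted onto R gives a new path R' strictly closer to s.  This path fails
under F1 but not under F2.
(b) If V' violates the condition at s, drop from V' its monitor (or any
vertex) to get F2, and let F1 = F2 + s.  A measurement path through s must
leave the monitor-free component of s on both sides, so it meets two
distinct vertices of V', one of which lies in F2: no path separates F1 from
F2. *)

Set Implicit Arguments. Unset Strict Implicit. Unset Printing Implicit Defensive.

Section PathSeq.
Variable T : eqType.
Implicit Types (e : rel T) (a : pred T) (x y u : T) (p q : seq T).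

Lemma has_split_last a p : has a p ->
  exists p1 u p2, [/\ p = p1 ++ u :: p2, a u & ~~ has a p2].
Proof.
elim: p => //= x p IH.
case: (boolP (has a p)) => [/IH [p1 [u [p2 [-> au nh]]]] _ | nh].
  by exists (x :: p1), u, p2.
by rewrite orbF => ax; exists [::], x, p.
Qed.

Lemma path_prefix_first e a x p : path e x p -> has a (x :: p) ->
  exists q, [/\ prefix q p, path e x q, a (last x q) & ~~ has a (belast x q)].
Proof.
elim: p x => [|y p IH] x /=; first by rewrite orbF => _ ax; exists [::].
case/andP=> exy hp; case: (boolP (a x)) => [ax _ | nax /= hyp].
  by exists [::].
have [q [pq hq aq nq]] := IH y hp hyp.
by exists (y :: q); rewrite /= eqxx pq exy hq aq negb_or nax.
Qed.

Lemma path_shorten_to e x p u : path e x p -> u \in x :: p ->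
  exists q, [/\ path e x q, uniq (x :: q), last x q = u & {subset q <= p}].
Proof.
move=> hp; rewrite in_cons => /predU1P [-> | up]; first by exists [::].
case/splitPr: up hp => p1 p2; rewrite -cat_rcons cat_path => /andP [hp1 _].
have : last x (rcons p1 u) = u by rewrite last_rcons.
case: (shortenP hp1) => q hq uq sub lq; exists q; split=> // c /sub.
by rewrite mem_cat => ->.
Qed.

Lemma path_suffix e x p p1 u p2 :
  x :: p = p1 ++ u :: p2 -> path e x p -> path e u p2.
Proof.
case: p1 => [[-> ->] // | y p1 [_ ->]].
by rewrite cat_path => /andP [_ /= /andP [_ ->]].
Qed.

Lemma rev_path_sym e x p y : symmetric e ->
  path e x (rcons p y) -> path e y (rev (x :: p)).
Proof.
move=> esym; have := rev_path e x (rcons p y).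
rewrite last_rcons belast_rcons => -> hp.
by rewrite (@eq_path _ _ e) // => u v; rewrite esym.
Qed.
Lemma uniq_catI (s1 c s2 : seq T) :
  uniq (s1 ++ s2) -> uniq c -> ~~ has (mem (s1 ++ s2)) c -> uniq (s1 ++ c ++ s2).
Proof.
move=> u12 uc dc; have /perm_uniq -> : perm_eq (s1 ++ c ++ s2) (c ++ s1 ++ s2).
  by rewrite perm_catCA.
by rewrite cat_uniq uc u12 has_sym dc.
Qed.
End PathSeq.

Section DeletedGraph.
Variables (V : finType) (e : rel V).
Implicit Types (W M : {set V}) (x : V) (p : seq V).

Lemma del_rel_sym W : symmetric e -> symmetric (del_rel e W).
Proof.
move=> esym x y; rewrite /del_rel esym.
by case: (e y x); case: (x \in W); case: (y \in W).
Qed.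

Lemma del_relU A B : del_rel (del_rel e A) B =2 del_rel e (A :|: B).
Proof.
move=> x y; rewrite /del_rel !inE !negb_or.
by case: (e x y); case: (x \in A); case: (y \in A); case: (x \in B); case: (y \in B).
Qed.

Lemma del_rel_pathE W x p : x \notin W ->
  path (del_rel e W) x p = path e x p && all [pred z | z \notin W] p.
Proof.
elim: p x => //= y p IH x xW; rewrite {1}/del_rel xW /=.
case: (boolP (y \in W)) => yW; first by rewrite !andbF.
by rewrite IH //; case: (e x y).
Qed.

Lemma csp_path_del W M p :
  csp_path (del_rel e W) M p -> csp_path e M p /\ ~~ fails W p.
Proof.
case=> x [q [[-> hq uq] [xM lM xl]]].
case: q hq uq lM xl => [|y q] hq uq lM xl; first by rewrite eqxx in xl.
have xW : x \notin W by case/andP: hq => /and3P [].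
move: hq; rewrite del_rel_pathE // => /andP [hq qW].
split; first by exists x, (y :: q).
by rewrite /fails -all_predC /= xW.
Qed.
End DeletedGraph.

Section Fan.
Variables (V : finType) (h : rel V) (M : {set V}).
Hypothesis hsym : symmetric h.
Implicit Types (x y z : V) (p q : seq V).

Definition mpath p : bool :=
  if p is x :: q then [&& path h x q, uniq p, x \in M, last x q \in M & x != last x q]
  else false.

Lemma mpathP p : reflect (csp_path h M p) (mpath p).
Proof.
case: p => [|x q]; first by right; case=> ? [? [[]]].
by apply: (iffP and5P) => [[hq uq xM lM xl] | [y [r [[[-> ->] hr ur] [yM lM yl]]]]];
  first exists x, q.
Qed.

Lemma mpath_split p y q :
  mpath (p ++ y :: q) = [&& path h (head y p) (behead (rcons p y)), path h y q,
    uniq (p ++ y :: q) & [&& head y p \in M, last y q \in M & head y p != last y q]].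
Proof.
case: p => [|x p] /=; first by rewrite !andbA.
by rewrite -cat_rcons cat_path last_rcons !last_cat /= last_rcons !andbA.
Qed.

Lemma mpath_rev p : mpath p -> mpath (rev p).
Proof.
case: p => [|x q] //= /and5P [hq uq xM lM xl].
case/lastP: q hq uq lM xl => [|q y] hq uq lM xl; first by rewrite eqxx in xl.
rewrite last_rcons in lM xl; rewrite rev_cons rev_rcons /=.
have := rev_path_sym hsym hq; rewrite rev_cons => ->.
rewrite last_rcons xM lM eq_sym xl !andbT -[_ && _]/(uniq (y :: rcons (rev q) x)).
by rewrite -rev_cons -rev_rcons rev_uniq.
Qed.

Lemma mpath_graft_right p y q z c :
  mpath (p ++ y :: q) -> z \in q -> path h y c -> last y c = z ->
  uniq (y :: c) -> {in c, forall v, v \in p ++ y :: q -> v = z} ->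
  exists2 r, mpath r & {subset c <= r}.
Proof.
move=> hR zq; case/splitPr: zq hR => q1 q2 hR.
case/lastP: c => [|c z' hc]; first by exists (p ++ y :: q1 ++ z :: q2).
rewrite last_rcons => zz uc cR; rewrite {}zz in hc uc cR *.
exists (p ++ y :: (rcons c z ++ q2)); last first.
  by move=> v vc; rewrite mem_cat in_cons mem_cat vc !orbT.
move: hR; rewrite !mpath_split !last_cat last_rcons /= => /and4P [-> hq uR ends].
have hq2 : path h z q2 by move: hq; rewrite cat_path /= => /and3P [].
rewrite cat_path hc last_rcons hq2 ends andbT.
move: uc; rewrite /= rcons_uniq => /andP [_ /andP [zc uc]].
have sub : subseq (rcons p y ++ z :: q2) (p ++ y :: q1 ++ z :: q2).
  by rewrite -(cat_rcons y p (q1 ++ _)) cat_subseq // suffix_subseq.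
rewrite andbT cat_rcons -cat_rcons; apply: uniq_catI => //; first exact: subseq_uniq sub uR.
apply/hasPn => v vc; apply/negP => /(mem_subseq sub) vR.
by move: zc; rewrite -(cR v) ?mem_rcons ?in_cons ?vc ?orbT.
Qed.

Lemma mpath_graft p y c z : mpath p -> y \in p -> path h y c -> last y c = z ->
  uniq (y :: c) -> {in c, forall v, v \in p -> v = z} -> (z \notin p -> z \in M) ->
  exists2 r, mpath r & {subset c <= r}.
Proof.
move=> hR yp; case/splitPr: yp hR => p1 p2 hR hc lc uc cR zM.
case: (boolP (z \in p2)) => zp2; first exact: mpath_graft_right hR zp2 hc lc uc cR.
have rev_p : rev (p1 ++ y :: p2) = rev p2 ++ y :: rev p1.
  by rewrite rev_cat rev_cons cat_rcons.
case: (boolP (z \in p1)) => zp1.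
  have := mpath_rev hR; rewrite rev_p => hR'.
  apply: (mpath_graft_right hR' _ hc lc uc); first by rewrite mem_rev.
  by move=> v vc; rewrite -rev_p mem_rev; exact: cR.
case/lastP: c hc lc uc cR => [|c z' hc]; first by exists (p1 ++ y :: p2).
rewrite last_rcons => zz; rewrite {}zz in hc * => uc cR.
have zp : z \notin p1 ++ y :: p2.
  move: uc => /andP [+ _]; rewrite mem_rcons in_cons negb_or => /andP [yz _].
  by rewrite mem_cat in_cons (negbTE zp1) (negbTE zp2) orbF eq_sym.
exists (p1 ++ y :: rcons c z); last by move=> v vc; rewrite mem_cat in_cons vc !orbT.
move: hR; rewrite !mpath_split /= last_rcons => /and4P [-> _ uR /andP [hM _]].
rewrite hc hM (zM zp) /=.
have -> : head y p1 != z.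
  by apply: contraNneq zp => <-; case: (p1) => [|? ?]; rewrite /= mem_head.
rewrite andbT -cat_rcons -(cats0 (rcons c z)); apply: uniq_catI.
- by rewrite cats0; move: uR; rewrite -cat_rcons cat_uniq => /and3P [].
- by case/andP: uc.
apply/hasPn => v vc; apply/negP; rewrite cats0 => vp.
have vz : v = z by apply: cR; rewrite // -cat_rcons mem_cat (vp : v \in rcons p1 y).
by move: zp; rewrite -vz -cat_rcons mem_cat (vp : v \in rcons p1 y).
Qed.

Variable s : V.
Hypothesis sM : s \notin M.
Hypothesis no_cut : forall v, v != s ->
  exists2 t, t \in M :\ v & connect (del_rel h [set v]) s t.

Lemma escape_path (P : seq V) v : s \in P -> v != s ->
  exists u W, [/\ u \in P, path (del_rel h [set v]) u W, uniq (u :: W),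
                  last u W \in M & ~~ has (mem P) W].
Proof.
move=> sP vs; have [t /setD1P [_ tM] /connectP [w hw lw]] := no_cut vs.
move: tM; rewrite lw; case: (shortenP hw) => w' hw' uw' _ lM.
have /has_split_last [W1 [u [W2 [ew uP nW2]]]] : has (mem P) (s :: w').
  by rewrite /= sP.
exists u, W2; split=> //; first exact: path_suffix ew hw'.
  by move: uw'; rewrite ew cat_uniq => /and3P [].
by move: lM; rewrite -[last s w']/(last s (s :: w')) ew last_cat.
Qed.

(* The detour goes from y back along q to the vertex u where an escape from s
   around y leaves s :: q for good, then along the escape to its first vertex
   in R or M. *)
Lemma mpath_step R q y : mpath R -> path h s (rcons q y) -> y \in R ->
  ~~ has (mem R) (s :: q) -> exists2 R', mpath R' & has (mem R') (s :: q).
Proof.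
move=> hR hq yR nR.
have ys : y != s by apply: contraNneq nR => <-; rewrite /= yR.
have [u [W [uP hW uW lW nW]]] := escape_path (mem_head s q) ys.
have uR : u \notin R by apply: contra nR => uR; apply/hasP; exists u.
have uy : u != y by apply: contraNneq uR => ->.
move: hW; rewrite del_rel_pathE ?inE // => /andP [hW yW].
have [Z [hZ uZ lZ subZ]] : exists Z, [/\ path h y Z, uniq (y :: Z), last y Z = u
    & {subset Z <= rev (s :: q)}].
  by apply: path_shorten_to (rev_path_sym hsym hq) _; rewrite in_cons mem_rev uP orbT.
have : has [pred v | (v \in R) || (v \in M)] (u :: W).
  by apply/hasP; exists (last u W); rewrite ?mem_last //= lW orbT.
case/(path_prefix_first hW) => X [pX hX aX nX].
have uZ' : u \in Z by have := mem_last y Z; rewrite lZ in_cons (negbTE uy).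
have XW : {subset X <= W} by case/prefixP: pX => W' -> v vX; rewrite mem_cat vX.
have uX : uniq X by apply: prefix_uniq pX _; case/andP: uW.
have [R' hR' sub] : exists2 R', mpath R' & {subset Z ++ X <= R'}.
  apply: (mpath_graft hR yR); first by rewrite cat_path hZ lZ hX.
  - by rewrite last_cat lZ.
  - rewrite -cat_cons cat_uniq uZ uX andbT; apply/hasPn => v /XW vW.
    rewrite in_cons negb_or; apply/andP; split; first by have := allP yW v vW; rewrite /= inE.
    by apply: contra (hasPn nW v vW) => /subZ; rewrite mem_rev.
  - move=> v; rewrite mem_cat => /orP [/subZ | vX] vR.
      by move=> vq; rewrite mem_rev in vR; case/negP: nR; apply/hasP; exists v.
    have : v \in u :: X by rewrite in_cons vX orbT.
    rewrite lastI mem_rcons in_cons => /predU1P [// | vb].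
    by move: (hasPn nX v vb); rewrite /= vR.
  - by case/orP: aX => ->.
by exists R' => //; apply/hasP; exists u => //; apply: sub; rewrite mem_cat uZ'.
Qed.

Lemma mpath_reach n R q : mpath R -> path h s q -> last s q \in R -> size q <= n ->
  exists2 R', mpath R' & s \in R'.
Proof.
elim: n R q => [|n IH] R q hR hq lq sq.
  by case: q sq lq hq => // _ lq _; exists R.
case/lastP: q hq lq sq => [|q y] hq lq sq; first by exists R.
rewrite last_rcons in lq; rewrite size_rcons ltnS in sq.
suff closer R' : mpath R' -> has (mem R') (s :: q) -> exists2 R'', mpath R'' & s \in R''.
  have [hasR | nR] := boolP (has (mem R) (s :: q)); first exact: closer hR hasR.
  by have [R' hR'] := mpath_step hR hq lq nR; apply: closer.
move=> hR' /hasP [u uq uR'].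
have hq' : path h s q by move: hq; rewrite rcons_path => /andP [].
have [q' [hq'' /andP [_ uq'] lq' subq']] := path_shorten_to hq' uq.
apply: (IH R' q') => //; first by rewrite lq'.
exact: leq_trans (uniq_leq_size uq' subq') sq.
Qed.

Lemma mpath_through : (exists2 t, t \in M & connect h s t) -> exists2 R, mpath R & s \in R.
Proof.
move=> [t1 t1M c1].
have t1s : t1 != s by apply: contraNneq sM => <-.
have [t2 /setD1P [t21 t2M] c2] := no_cut t1s.
have c12 : connect h t1 t2.
  rewrite (sym_connect_sym hsym) in c1; apply: connect_trans c1 _.
  by apply: connect_sub c2 => u v /and3P [huv _ _]; exact: connect1.
case/connectP: c12 => p hp lp; move: lp; case: (shortenP hp) => p' hp' up' _ lp.
case/connectP: c1 => q hq lq.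
apply: (@mpath_reach (size q) (t1 :: p') q) => //.
  by rewrite /= hp' t1M -lp t2M eq_sym t21 !andbT -[_ && _]/(uniq (t1 :: p')).
by rewrite -lq mem_head.
Qed.
End Fan.

Lemma card_monitors_le1 (V : finType) (M F V' : {set V}) v :
  F \subset ~: M -> V' \subset v |: F -> #|V' :&: M| <= 1.
Proof.
move=> FM VF; rewrite -(cards1 v) subset_leq_card //; apply/subsetP => x /setIP [xV xM].
have /setU1P [-> | xF] := subsetP VF x xV; first exact: set11.
by have := subsetP FM x xF; rewrite !inE xM.
Qed.

Lemma cond_distinguishable (V : finType) (e : rel V) (M S F1 F2 : {set V}) k s :
  symmetric e -> cond e M S k.+1 -> F2 \subset ~: M -> #|F2| <= k ->
  s \in S -> s \notin M -> s \in F1 -> s \notin F2 -> distinguishable e M F1 F2.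
Proof.
move=> esym hc F2M cF2 sS sM s1 s2.
have no_cut v : v != s ->
    exists2 t, t \in M :\ v & connect (del_rel (del_rel e F2) [set v]) s t.
  move=> vs; have [||m] := hc (v |: F2) _ (card_monitors_le1 F2M (subxx _)) s sS.
  - by rewrite cardsU1 -add1n leq_add ?leq_b1.
  - by rewrite !inE negb_or eq_sym vs.
  rewrite !inE negb_or => /andP [/andP [mv _] mM] cm.
  by exists m; rewrite ?inE ?mv // (eq_connect (del_relU e F2 [set v])) setUC.
have reach : exists2 t, t \in M & connect (del_rel e F2) s t.
  have [m] := hc F2 (leqW cF2) (card_monitors_le1 (v := s) F2M (subsetUr _ _)) s sS s2.
  by rewrite inE => /andP [_ mM]; exists m.
have [R /mpathP /csp_path_del [cR nF2] sR] :=
  mpath_through (del_rel_sym F2 esym) sM no_cut reach.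
exists R; split=> //; rewrite (negbTE nF2).
by have -> : fails F1 R by apply/hasP; exists s.
Qed.

Section NoMonitorComponent.
Variables (V : finType) (e : rel V) (M V' : {set V}) (s : V).
Hypothesis esym : symmetric e.
Hypothesis sM : s \notin M.
Hypothesis sV : s \notin V'.
Hypothesis isolated : forall m, m \in M :\: V' -> ~~ connect (del_rel e V') s m.

Lemma path_to_monitor_meets l : path e s l -> last s l \in M -> has (mem V') l.
Proof.
move=> hl lM; apply: contraT => nV.
have hd : path (del_rel e V') s l.
  by rewrite del_rel_pathE // hl; apply/allP => z /(hasPn nV).
have lV : last s l \notin V'.
  by have := mem_last s l; rewrite in_cons => /predU1P [-> // | /(hasPn nV)].
have mV : last s l \in M :\: V' by rewrite inE lV lM.
by have := isolated mV; rewrite (path_connect hd (mem_last s l)).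
Qed.

Lemma csp_path_meets_twice p : csp_path e M p -> s \in p ->
  exists v1 v2, [/\ v1 \in p, v2 \in p, v1 \in V', v2 \in V' & v1 != v2].
Proof.
case=> x [q [[-> hq uq] [xM lM _]]].
rewrite in_cons => /predU1P [sx | sq]; first by move: sM; rewrite sx xM.
case/splitPr: sq hq uq lM => q1 q2; rewrite -cat_rcons cat_path last_rcons.
rewrite last_cat last_rcons => /andP [hq1 hq2] uq lM.
have /hasP [v2 v2q v2V] := path_to_monitor_meets hq2 lM.
have /hasP [v1 v1q v1V] : has (mem V') (rev (x :: q1)).
  by apply: path_to_monitor_meets (rev_path_sym esym hq1) _; rewrite rev_cons last_rcons.
rewrite mem_rev in v1q.
have v1s : v1 \in rcons (x :: q1) s by rewrite mem_rcons in_cons v1q orbT.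
move: uq; rewrite -cat_cons -rcons_cons cat_uniq => /and3P [_ /hasPn dis _].
exists v1, v2; split=> //; rewrite -?cat_cons -?rcons_cons ?mem_cat ?v1s ?v2q ?orbT //.
by apply: contraTneq v2q => <-; apply: contraL v1s; exact: dis.
Qed.
End NoMonitorComponent.

Lemma cut_remove_one (V : finType) (M V' : {set V}) k :
  0 < k -> #|V'| <= k -> #|V' :&: M| <= 1 ->
  exists F : {set V}, [/\ F \subset V', F \subset ~: M, #|F| < k & #|V' :\: F| <= 1].
Proof.
move=> k0 cV cVM; have [-> | [x xV]] := set_0Vmem V'.
  by exists set0; split; rewrite ?sub0set ?setD0 ?cards0.
have [w wV VMw] : exists2 w, w \in V' & V' :&: M \subset [set w].
  have [-> | [m /setIP [mV mM]]] := set_0Vmem (V' :&: M); first by exists x; rewrite ?sub0set.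
  exists m => //; apply/subsetP => y yVM; rewrite inE; apply/eqP.
  by apply: (card_le1_eqP cVM); rewrite // inE mV mM.
exists (V' :\ w); split; first exact: subD1set.
- apply/subsetP => y /setD1P [yw yV]; rewrite inE; apply: contra yw => yM.
  by have := subsetP VMw y; rewrite !inE yV yM => /(_ isT).
- by move: cV; rewrite (cardsD1 w V') wV.
rewrite -(cards1 w) subset_leq_card //; apply/subsetP => y.
by rewrite !inE negb_and negbK => /andP [/orP [] // yw yV]; rewrite yV in yw.
Qed.

Lemma k_identifiable_cond (V : finType) (e : rel V) (M S : {set V}) k :
  symmetric e -> S \subset ~: M -> 0 < k -> k_identifiable e M S k -> cond e M S k.
Proof.
move=> esym SM k0 kid V' cV cVM s sS sV.
apply/exists_inP; apply: contraT => /exists_inPn isolated.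
have sM : s \notin M by have := subsetP SM s sS; rewrite inE.
have [F [FV FM cF VF]] := cut_remove_one k0 cV cVM.
have sF : s \notin F by apply: contra sV; exact: subsetP FV s.
have [|||p [cp]] := kid (s |: F) F _ FM _ (ltnW cF).
- by rewrite subUset sub1set inE sM.
- by rewrite cardsU1 sF.
- by apply/negP => /eqP /setP /(_ s); rewrite !inE eqxx sS (negbTE sF).
case/negP; apply/eqP; case: (boolP (s \in p)) => sp; last first.
  by apply: eq_in_has => x xp; rewrite in_setU1; case: eqP => // xs; rewrite -xs xp in sp.
have [v1 [v2 [v1p v2p v1V v2V v12]]] := csp_path_meets_twice esym sM sV isolated cp sp.
have -> : fails (s |: F) p by apply/hasP; exists s; rewrite ?setU11.
symmetry; apply/hasP; have [v1F | v1F] := boolP (v1 \in F); first by exists v1.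
exists v2 => //; apply: contraNT v12 => v2F; apply/eqP.
by apply: (card_le1_eqP VF); rewrite inE ?v1F ?v2F.
Qed.

Lemma distinguishable_sym (V : finType) (e : rel V) (M F1 F2 : {set V}) :
  distinguishable e M F1 F2 -> distinguishable e M F2 F1.
Proof. by case=> p [cp d]; exists p; rewrite eq_sym. Qed.

Theorem lemma5 (V : finType) (e : rel V) (M S : {set V}) (k : nat) :
  simple_graph e -> connected_graph e ->
  S \subset ~: M -> 1 <= k ->
  (cond e M S k.+1 -> k_identifiable e M S k) /\
  (k_identifiable e M S k -> cond e M S k).
Proof.
move=> [esym _] _ SM k0; split; last exact: k_identifiable_cond.
move=> hc F1 F2 F1M F2M c1 c2 neq.
have /exists_inP [s sS] : [exists s in S, (s \in F1) != (s \in F2)].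
  apply: contraNT neq => /exists_inPn same; apply/eqP/setP => x; rewrite !inE.
  by case: (boolP (x \in S)) => xS; rewrite ?andbF // !andbT; apply/eqP/negPn/same.
have sM : s \notin M by have := subsetP SM s sS; rewrite inE.
case s1 : (s \in F1); case s2 : (s \in F2) => //= _.
  exact: cond_distinguishable esym hc F2M c2 sS sM s1 (negbT s2).
exact/distinguishable_sym/(cond_distinguishable esym hc F1M c1 sS sM s2 (negbT s1)).
Qed.
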